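(* Let $n\geq 2$ and let $\mathcal{G}=(\mathcal{V},\mathcal{E})$ be a directed graph on $\mathcal{V}=\{1,\ldots,n\}$ in which every node has at least one outgoing edge, with hyperlink matrix $A$, let $m\in(0,1)$, and let $x^*$ be the PageRank vector. Consider the following randomized algorithm. Initially $x_i(0)=z_i(0)=m/n$ for all $i\in\mathcal{V}$. At each time $k\geq 0$, a page $\theta(k)\in\mathcal{V}$ is selected, the sequence $\{\theta(k)\}$ being i.i.d. with $\mathrm{Prob}\{\theta(k)=i\}=1/n$ for every $i\in\mathcal{V}$, and each page $i\in\mathcal{V}$ updates $$x_i(k+1)=\begin{cases}x_i(k)+\frac{1-m}{n_{\theta(k)}}z_{\theta(k)}(k)&\text{if } i\in\mathcal{L}^{\text{out}}_{\theta(k)},\\ x_i(k)&\text{otherwise,}\end{cases}$$ $$z_i(k+1)=\begin{cases}0&\text{if } i=\theta(k),\\ z_i(k)+\frac{1-m}{n_{\theta(k)}}z_{\theta(k)}(k)&\text{if } i\in\mathcal{L}^{\text{out}}_{\theta(k)},\\ z_i(k)&\text{otherwise.}\end{cases}$$ Then $x(k)\to x^*$ as $k\to\infty$ with probability $1$. Moreover: (i) $x(k)\leq x(k+1)\leq x^*$ for all $k\geq 0$; (ii) $\mathbb{E}[x(k)]\to x^*$ as $k\to\infty$, and this convergence is exponential, i.e., there exist $C>0$ and $\rho\in(0,1)$ with $\|\mathbb{E}[x(k)]-x^*\|\leq C\rho^k$ for all $k\geq 0$.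
   Context: Write $(i,j)\in\mathcal{E}$ if page $i$ has a link to page $j$. $\mathcal{L}_j^{\text{out}}=\{i:(j,i)\in\mathcal{E}\}$ and $n_j=|\mathcal{L}_j^{\text{out}}|\geq 1$. The hyperlink matrix $A=(a_{ij})$ is defined by $a_{ij}=1/n_j$ if $i\in\mathcal{L}_j^{\text{out}}$ and $a_{ij}=0$ otherwise (column stochastic). The PageRank vector $x^*$ satisfies $x^*=(1-m)Ax^*+\frac{m}{n}\mathbf{1}_n$ and $\mathbf{1}_n^Tx^*=1$. Here $x(k)=(x_1(k),\ldots,x_n(k))^T$; inequalities between vectors are entrywise. *)

From HB Require Import structures.
From mathcomp Require Import all_boot all_order all_algebra.
From mathcomp Require Import all_classical all_reals all_analysis.
Set Implicit Arguments. Unset Strict Implicit. Unset Printing Implicit Defensive.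
Import Order.TTheory GRing.Theory Num.Theory.
Import numFieldNormedType.Exports.
Local Open Scope classical_set_scope.
Local Open Scope ring_scope.

(* A directed graph on 'I_n is a relation E : rel 'I_n, E i j <-> (i,j) in E,
   i.e. page i links to page j. *)

Definition Lout n (E : rel 'I_n) (j : 'I_n) : {set 'I_n} := [set i | E j i].
Definition outdeg n (E : rel 'I_n) (j : 'I_n) : nat := #|Lout E j|.

Definition hyperlink (R : fieldType) n (E : rel 'I_n) : 'M[R]_n :=
  \matrix_(i, j) (if i \in Lout E j then (outdeg E j)%:R^-1 else 0).

Definition pr_step (R : fieldType) n (E : rel 'I_n) (m : R) (th : 'I_n)
  (s : ('I_n -> R) * ('I_n -> R)) : ('I_n -> R) * ('I_n -> R) :=
  let x := s.1 in let z := s.2 in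
  let c := (1 - m) / (outdeg E th)%:R * z th in
  (fun i => if i \in Lout E th then x i + c else x i,
   fun i => if i == th then 0 else if i \in Lout E th then z i + c else z i).

Fixpoint pr_state (R : fieldType) n (E : rel 'I_n) (m : R)
  (theta : nat -> 'I_n) (k : nat) : ('I_n -> R) * ('I_n -> R) :=
  match k with
  | 0 => (fun _ => m / n%:R, fun _ => m / n%:R)
  | k'.+1 => pr_step E m (theta k') (pr_state E m theta k')
  end.

Definition pr_x (R : fieldType) n (E : rel 'I_n) (m : R)
  (theta : nat -> 'I_n) (k : nat) : 'I_n -> R := (pr_state E m theta k).1.

Definition iid_uniform_seq (R : realType) d (T : measurableType d)
  (P : probability T R) n (theta : nat -> T -> 'I_n) : Prop :=
  (forall k i, measurable (theta k @^-1` [set i])) /\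
  (forall k i, P (theta k @^-1` [set i]) = (n%:R^-1)%:E) /\
  (forall (s : seq nat) (f : nat -> 'I_n), uniq s ->
     P (\big[setI/setT]_(k <- s) (theta k @^-1` [set f k])) =
     (\prod_(k <- s) P (theta k @^-1` [set f k]))%E).

(* Write z(k) for the residual vector.  Every update preserves the identity
   x* - x = (1 - m) A (x* - x + z), which together with z >= 0 forces x <= x*
   and m * sum_i (x*_i - x_i) = (1 - m) * sum_i z_i.  An update at page th
   removes exactly m z_th from the total residual, so averaging over the
   uniform choice of th gives E[sum_i z_i(k)] = m ((n - m) / n)^k; expectations
   are finite averages over the n^k selection words of length k.  This gives
   the geometric rate for E[x(k)], and, with Markov's inequality and the
   monotonicity of sum_i z_i(k), the almost sure convergence. *)

From HB Require Import structures.
From mathcomp Require Import all_boot all_order all_algebra.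
From mathcomp Require Import all_classical all_reals all_analysis.
From mathcomp Require Import ring lra measurable_realfun.
Set Implicit Arguments. Unset Strict Implicit. Unset Printing Implicit Defensive.
Import Order.TTheory GRing.Theory Num.Theory.
Import numFieldNormedType.Exports.
Local Open Scope classical_set_scope.
Local Open Scope ring_scope.

Lemma sumr_delta (R : pzSemiRingType) (I : finType) (F : I -> R) (k : I) :
  \sum_j (j == k)%:R * F j = F k.
Proof. by rewrite (bigD1 k) //= eqxx mul1r big1 ?addr0 // => j /negbTE ->; rewrite mul0r. Qed.

Lemma natr_neq0_of_ord (R : numDomainType) n (i : 'I_n) : n%:R != 0 :> R.
Proof. by rewrite pnatr_eq0 -lt0n (leq_ltn_trans _ (ltn_ord i)). Qed.

Section Words.
Variable T : finType.

Fixpoint words k : seq (seq T) :=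
  if k is k'.+1 then [seq rcons s i | s <- words k', i <- enum T] else [:: [::]].

Lemma mem_words k s : (s \in words k) = (size s == k).
Proof.
elim: k s => [|k IH] s /=; first by rewrite inE; case: s.
apply/allpairsP/idP => [[[s' i] [s'_in _ ->]]|]; first by rewrite size_rcons eqSS -IH.
case/lastP: s => [//|s' i]; rewrite size_rcons eqSS => s'_size.
by exists (s', i); rewrite IH mem_enum.
Qed.

Lemma words_uniq k : uniq (words k).
Proof.
elim: k => [//|k IH] /=; apply: allpairs_uniq => //; first exact: enum_uniq.
by move=> [s i] [s' i'] _ _ /= /eqP; rewrite eqseq_rcons => /andP[/eqP-> /eqP->].
Qed.

Lemma size_words k : size (words k) = (#|T| ^ k)%N.
Proof. by elim: k => [//|k IH] /=; rewrite size_allpairs IH -cardE expnSr. Qed.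

Lemma big_words_rcons (R : nmodType) (F : seq T -> R) k :
  \sum_(s <- words k.+1) F s = \sum_(s <- words k) \sum_i F (rcons s i).
Proof. by rewrite /= big_allpairs_dep; apply: eq_bigr => s _; rewrite big_enum. Qed.

End Words.

Section Dynamics.
Variables (R : realFieldType) (n : nat) (E : rel 'I_n) (m : R).
Hypothesis noloop : forall i, ~~ E i i.
Hypothesis outdeg_gt0 : forall j, (0 < outdeg E j)%N.
Hypotheses (m_gt0 : 0 < m) (m_lt1 : m < 1).

Local Notation state := (('I_n -> R) * ('I_n -> R))%type.

Lemma hyperlinkE i j : hyperlink R E i j = (E j i)%:R / (outdeg E j)%:R.
Proof. by rewrite mxE inE; case: (E j i); rewrite ?mul1r ?mul0r. Qed.

Lemma hyperlink_ge0 i j : 0 <= hyperlink R E i j.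
Proof. by rewrite hyperlinkE mulr_ge0 ?invr_ge0 ?ler0n. Qed.

Lemma natr_outdeg j : (outdeg E j)%:R = \sum_i (E j i)%:R :> R.
Proof.
rewrite -natr_sum /outdeg -sum1_card big_mkcond /=.
by congr _%:R; apply: eq_bigr => i _; rewrite inE; case: (E j i).
Qed.

Lemma outdeg_neq0 j : (outdeg E j)%:R != 0 :> R.
Proof. by rewrite pnatr_eq0 -lt0n outdeg_gt0. Qed.

Lemma hyperlink_colsum j : \sum_i hyperlink R E i j = 1.
Proof.
under eq_bigr do rewrite hyperlinkE.
by rewrite -mulr_suml -natr_outdeg divff ?outdeg_neq0.
Qed.

Lemma sum_hyperlink_mul (v : 'I_n -> R) :
  \sum_i \sum_j hyperlink R E i j * v j = \sum_j v j.
Proof.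
rewrite exchange_big /=.
by under eq_bigr do rewrite -mulr_suml hyperlink_colsum mul1r.
Qed.

Definition share th (s : state) := (1 - m) / (outdeg E th)%:R * s.2 th.

Lemma pr_step_x th s i :
  (pr_step E m th s).1 i = s.1 i + (E th i)%:R * share th s.
Proof. by rewrite /= inE; case: (E th i); rewrite ?mul1r ?mul0r ?addr0. Qed.

Lemma pr_step_z th s i :
  (pr_step E m th s).2 i = s.2 i - (i == th)%:R * s.2 th + (E th i)%:R * share th s.
Proof.
rewrite /= inE; case: eqP => [->|_].
  by rewrite (negbTE (noloop th)) mul1r mul0r addr0 subrr.
by case: (E th i); rewrite ?mul1r ?mul0r ?addr0 ?subr0.
Qed.

Definition zmass (s : state) := \sum_i s.2 i.

Lemma zmass_step th s : zmass (pr_step E m th s) = zmass s - m * s.2 th.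
Proof.
rewrite /zmass; under eq_bigr do rewrite pr_step_z.
rewrite big_split sumrB /= sumr_delta -mulr_suml -natr_outdeg /share.
have := outdeg_neq0 th; move: (outdeg E th)%:R => d d_neq0.
by field.
Qed.

Definition znonneg (s : state) := forall i, 0 <= s.2 i.

Lemma share_ge0 th s : znonneg s -> 0 <= share th s.
Proof. by move=> s_ge0; rewrite mulr_ge0 ?s_ge0 ?divr_ge0 ?ler0n ?subr_ge0 ?(ltW m_lt1). Qed.

Lemma pr_step_znonneg th s : znonneg s -> znonneg (pr_step E m th s).
Proof.
move=> s_ge0 i /=; case: eqP => // _.
by case: ifP => _ //; rewrite addr_ge0 ?share_ge0.
Qed.

Lemma subinvariant_eq0 (v : 'I_n -> R) :
  (forall i, 0 <= v i) -> (forall i, v i <= (1 - m) * \sum_j hyperlink R E i j * v j) ->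
  forall i, v i = 0.
Proof.
move=> v_ge0 v_sub.
have sum_sub : \sum_i v i <= (1 - m) * \sum_i v i.
  by apply: le_trans (ler_sum _ (fun i _ => v_sub i)) _; rewrite -mulr_sumr sum_hyperlink_mul.
have sum_eq0 : \sum_i v i = 0.
  apply/eqP; rewrite eq_le sumr_ge0 // andbT -(pmulr_rle0 _ m_gt0).
  by move: sum_sub; move: (\sum_i v i) => a; lra.
by move=> i; apply/eqP; move/eqP: sum_eq0; rewrite psumr_eq0 // => /allP/(_ i (mem_index_enum i)).
Qed.

Lemma pr_stateS th k :
  pr_state E m th k.+1 = pr_step E m (th k) (pr_state E m th k).
Proof. by []. Qed.

Lemma pr_state_znonneg th k : znonneg (pr_state E m th k).
Proof.
elim: k => [|k IH] /=; last exact: pr_step_znonneg.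
by move=> i; rewrite divr_ge0 ?ler0n ?(ltW m_gt0).
Qed.

Lemma pr_state_ext th th' k : (forall j, (j < k)%N -> th j = th' j) ->
  pr_state E m th k = pr_state E m th' k.
Proof.
elim: k => [//|k IH] eq_th /=.
by rewrite eq_th // IH // => j lt_jk; rewrite eq_th // ltnW.
Qed.

Lemma pr_x_nondecreasing th k i : pr_x E m th k i <= pr_x E m th k.+1 i.
Proof.
rewrite /pr_x pr_stateS pr_step_x lerDl.
exact: mulr_ge0 (ler0n _ _) (share_ge0 _ (pr_state_znonneg _ _)).
Qed.

Lemma pr_x_ge0 th k i : 0 <= pr_x E m th k i.
Proof.
elim: k => [|k IH]; first by rewrite /pr_x /= divr_ge0 ?ler0n ?(ltW m_gt0).
exact: le_trans IH (pr_x_nondecreasing _ _ _).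
Qed.

Lemma zmass_pr_state_ge0 th k : 0 <= zmass (pr_state E m th k).
Proof. by apply: sumr_ge0 => i _; apply: pr_state_znonneg. Qed.

Lemma zmass_pr_state_nonincreasing th :
  {homo (fun k => zmass (pr_state E m th k)) : k k' / (k <= k')%N >-> k' <= k}.
Proof.
apply: homo_leq => [x|y x z yx zy|k]; [exact: lexx | exact: le_trans zy yx | ].
by cbv beta; rewrite pr_stateS zmass_step lerBlDr lerDl mulr_ge0 ?pr_state_znonneg ?(ltW m_gt0).
Qed.

Section Averaging.
(* [d0] is only the default value of [nth]: it is never read on words of length [k]. *)
Variable d0 : 'I_n.

Lemma pr_state_rcons s i : pr_state E m (nth d0 (rcons s i)) (size s).+1
  = pr_step E m i (pr_state E m (nth d0 s) (size s)).
Proof.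
rewrite pr_stateS nth_rcons ltnn eqxx; congr pr_step.
by apply: pr_state_ext => j lt_js; rewrite nth_rcons lt_js.
Qed.

Lemma sum_words_zmass k :
  \sum_(s <- words 'I_n k) zmass (pr_state E m (nth d0 s) k) = m * (n%:R - m) ^+ k.
Proof.
elim: k => [|k IH].
  rewrite big_seq1 /zmass /= sumr_const card_ord expr0 mulr1 -[_ *+ n]mulr_natr.
  by rewrite divfK ?(natr_neq0_of_ord _ d0).
rewrite big_words_rcons.
transitivity (\sum_(s <- words 'I_n k) (n%:R - m) * zmass (pr_state E m (nth d0 s) k)).
  rewrite !big_seq; apply: eq_bigr => s; rewrite mem_words => /eqP <-.
  under eq_bigr do rewrite pr_state_rcons zmass_step.
  by rewrite sumrB sumr_const card_ord -mulr_sumr /zmass mulrBl mulr_natl.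
by rewrite -mulr_sumr IH exprS; ring.
Qed.

End Averaging.

Section Invariant.
Variable xs : 'I_n -> R.

Definition gap_invariant (s : state) := forall i,
  xs i - s.1 i = (1 - m) * \sum_j hyperlink R E i j * (xs j - s.1 j + s.2 j).

Lemma pr_step_invariant th s : gap_invariant s -> gap_invariant (pr_step E m th s).
Proof.
move=> s_inv i.
have -> : \sum_j hyperlink R E i j * (xs j - (pr_step E m th s).1 j + (pr_step E m th s).2 j)
    = \sum_j hyperlink R E i j * (xs j - s.1 j + s.2 j)
      - \sum_j (j == th)%:R * (hyperlink R E i j * s.2 th).
  by rewrite -sumrB; apply: eq_bigr => j _; rewrite pr_step_x pr_step_z; ring.
rewrite sumr_delta mulrBr -s_inv pr_step_x hyperlinkE /share.
have := outdeg_neq0 th; move: (outdeg E th)%:R => d d_neq0.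
by field.
Qed.

Lemma invariant_x_le s : gap_invariant s -> znonneg s -> forall i, s.1 i <= xs i.
Proof.
move=> s_inv s_ge0.
pose v i := Num.max (s.1 i - xs i) 0.
have v_ge0 i : 0 <= v i by rewrite le_max lexx orbT.
have v_sub i : v i <= (1 - m) * \sum_j hyperlink R E i j * v j.
  rewrite ge_max mulr_ge0 ?sumr_ge0 ?subr_ge0 ?(ltW m_lt1) //=; last first.
    by move=> j _; rewrite mulr_ge0 ?hyperlink_ge0.
  rewrite andbT -opprB s_inv -mulrN ler_wpM2l ?subr_ge0 ?(ltW m_lt1) // -sumrN.
  apply: ler_sum => j _; rewrite -mulrN ler_wpM2l ?hyperlink_ge0 // le_max.
  by rewrite opprD opprB lerBlDr lerDl s_ge0.
move=> i; have /eqP := subinvariant_eq0 v_ge0 v_sub i.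
by rewrite eq_le ge_max subr_le0 => /andP[/andP[]].
Qed.

Lemma invariant_sum s : gap_invariant s ->
  m * \sum_i (xs i - s.1 i) = (1 - m) * zmass s.
Proof.
move=> s_inv.
have gap_sum : \sum_i (xs i - s.1 i) = (1 - m) * \sum_j (xs j - s.1 j + s.2 j).
  by under eq_bigr do rewrite s_inv; rewrite -mulr_sumr sum_hyperlink_mul.
move: gap_sum; rewrite [X in _ * X]big_split /= /zmass.
move: (\sum_i (xs i - s.1 i)) (\sum_i s.2 i) => a b gap_sum.
have -> : m * a = a - (1 - m) * a by ring.
by rewrite {1}gap_sum; ring.
Qed.

Hypothesis xs_fix : forall i,
  xs i = (1 - m) * \sum_j hyperlink R E i j * xs j + m / n%:R.

Lemma pr_state_invariant th k : gap_invariant (pr_state E m th k).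
Proof.
elim: k => [|k IH] /=; last exact: pr_step_invariant.
by move=> i /=; under eq_bigr do rewrite subrK; rewrite {1}xs_fix addrK.
Qed.

Lemma pr_x_le th k i : pr_x E m th k i <= xs i.
Proof. exact: invariant_x_le (pr_state_invariant th k) (pr_state_znonneg th k) i. Qed.

Lemma sum_pr_gap th k :
  \sum_i (xs i - pr_x E m th k i) = (1 - m) / m * zmass (pr_state E m th k).
Proof.
rewrite mulrAC -(invariant_sum (pr_state_invariant th k)).
by rewrite mulrAC divff ?mul1r ?gt_eqF.
Qed.

Lemma pr_gap_le_zmass th k i :
  xs i - pr_x E m th k i <= (1 - m) / m * zmass (pr_state E m th k).
Proof.
rewrite -sum_pr_gap (bigD1 i) //= lerDl.
by apply: sumr_ge0 => j _; rewrite subr_ge0 pr_x_le.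
Qed.

Lemma pr_x_cvg th :
  (forall e, 0 < e -> exists k, zmass (pr_state E m th k) < e) ->
  forall i, (fun k => pr_x E m th k i) @ \oo --> xs i.
Proof.
move=> zmass_small i; apply/cvgrPdist_le => e e_gt0.
have m1_gt0 : 0 < 1 - m by rewrite subr_gt0.
have [k0 zmass_k0] := zmass_small (e * m / (1 - m)) (divr_gt0 (mulr_gt0 e_gt0 m_gt0) m1_gt0).
exists k0 => // k /= le_k0k.
rewrite ger0_norm ?subr_ge0 ?pr_x_le //.
apply: le_trans (pr_gap_le_zmass th k i) _.
have zmass_k : zmass (pr_state E m th k) <= e * m / (1 - m).
  exact: le_trans (zmass_pr_state_nonincreasing th le_k0k) (ltW zmass_k0).
apply: le_trans (ler_wpM2l (divr_ge0 (ltW m1_gt0) (ltW m_gt0)) zmass_k) _.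
rewrite [leLHS](_ : _ = e) //.
by field; rewrite !gt_eqF.
Qed.

End Invariant.
End Dynamics.

Section Sampling.
Variables (R : realType) (n : nat) (d : measure_display) (T : measurableType d).
Variables (P : probability T R) (theta : nat -> T -> 'I_n) (d0 : 'I_n).
Hypothesis theta_iid : iid_uniform_seq P theta.

Definition prefix k t := mkseq (fun j => theta j t) k.

Lemma prefix_in_words k t : prefix k t \in words 'I_n k.
Proof. by rewrite mem_words size_mkseq. Qed.

Definition cylinder (s : seq 'I_n) :=
  \big[setI/setT]_(j <- iota 0 (size s)) (theta j @^-1` [set nth d0 s j]).

Lemma cylinderP k s t : size s = k -> cylinder s t <-> s = prefix k t.
Proof.
move=> size_s; rewrite /cylinder -bigcap_seq; split => [s_t|-> j].
  apply: (@eq_from_nth _ d0); rewrite ?size_mkseq // => j lt_js.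
  by rewrite nth_mkseq -?size_s //; apply/esym/s_t; rewrite /= mem_iota.
by rewrite /= mem_iota size_mkseq => /andP[_ lt_jk] /=; rewrite nth_mkseq.
Qed.

Lemma measurable_cylinder s : measurable (cylinder s).
Proof. by apply: bigsetI_measurable => j _; case: theta_iid => theta_meas _. Qed.

Lemma probability_cylinder s : P (cylinder s) = (n%:R^-1 ^+ size s)%:E.
Proof.
case: theta_iid => _ [theta_unif theta_indep].
rewrite /cylinder theta_indep ?iota_uniq //; under eq_bigr do rewrite theta_unif.
by rewrite prodEFin big_const_seq count_predT size_iota -Monoid.iteropE.
Qed.

Lemma prefix_indicator k (g : seq 'I_n -> R) t :
  g (prefix k t) = \sum_(s <- words 'I_n k) g s * \1_(cylinder s) t.
Proof.
rewrite (bigD1_seq (prefix k t)) ?prefix_in_words ?words_uniq //=.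
rewrite indicE mem_set ?mulr1; last exact/(cylinderP _ (size_mkseq _ _)).
rewrite big1_seq ?addr0 // => s /andP[s_neq]; rewrite mem_words => /eqP size_s.
rewrite indicE memNset ?mulr0 // => /(cylinderP _ size_s) s_eq.
by rewrite s_eq eqxx in s_neq.
Qed.

Lemma integral_prefix k (g : seq 'I_n -> R) : (forall s, 0 <= g s) ->
  (\int[P]_(t in setT) (g (prefix k t))%:E)%E
  = (\sum_(s <- words 'I_n k) g s * n%:R^-1 ^+ k)%:E.
Proof.
move=> g_ge0.
under eq_integral do rewrite prefix_indicator -sumEFin.
have indic_meas s : measurable_fun setT (fun t => (\1_(cylinder s) t : R)%:E).
  exact/measurable_EFinP/measurable_indic/measurable_cylinder.
rewrite ge0_integral_sum //; last first.
- by move=> s t _; rewrite lee_fin mulr_ge0 ?indicE ?ler0n.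
- by move=> s; under eq_fun do rewrite EFinM; exact: measurable_funeM.
rewrite -sumEFin big_seq [in RHS]big_seq; apply: eq_bigr => s.
rewrite mem_words => /eqP <-.
under eq_integral do rewrite EFinM.
have indic_ge0 t : (0 <= (\1_(cylinder s) t : R)%:E)%E by rewrite lee_fin indicE ler0n.
rewrite (ge0_integralZl_EFin _ _ (fun t _ => indic_ge0 t) (indic_meas s) (g_ge0 s)) //.
rewrite (integral_indic _ measurableT (measurable_cylinder s)).
have -> : cylinder s `&` setT = cylinder s by exact: setIT.
by rewrite EFinM; congr (_ * _)%E; exact: probability_cylinder.
Qed.

Lemma prefix_set_cylinders k (Q : pred (seq 'I_n)) :
  [set t | Q (prefix k t)] = \big[setU/set0]_(s <- words 'I_n k | Q s) cylinder s.
Proof.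
rewrite -bigcup_seq_cond; apply/seteqP; split => t /=.
  move=> Q_t; exists (prefix k t); first by rewrite /= prefix_in_words.
  exact/(cylinderP _ (size_mkseq _ _)).
move=> [s /= /andP[]]; rewrite mem_words => /eqP size_s Q_s.
by move/(cylinderP _ size_s) <-.
Qed.

Lemma measurable_prefix_set k (Q : pred (seq 'I_n)) :
  measurable [set t | Q (prefix k t)].
Proof.
by rewrite prefix_set_cylinders; apply: bigsetU_measurable => s _; exact: measurable_cylinder.
Qed.

Lemma probability_prefix_set k (Q : pred (seq 'I_n)) :
  P [set t | Q (prefix k t)] = (\sum_(s <- words 'I_n k) (Q s)%:R * n%:R^-1 ^+ k)%:E.
Proof.
rewrite -integral_prefix; last by move=> s; rewrite ler0n.
have := integral_indic P measurableT (measurable_prefix_set k Q).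
rewrite setIT => <-.
apply: eq_integral => t _; rewrite indicE; congr (_%:R)%:E.
by case: (boolP (Q (prefix k t))) => Q_t; [rewrite mem_set | rewrite memNset //; apply/negP].
Qed.

End Sampling.

Lemma geometric_bound_le0 (R : archiRealFieldType) (a c r : R) :
  `|r| < 1 -> (forall k, a <= c * r ^+ k) -> a <= 0.
Proof.
move=> r_lt1 a_le.
apply: (closed_cvg _ (@closed_ge _ a) _ _ (cvg_geometric c r_lt1)).
exact: nearW.
Qed.

Lemma cvg_geometric_rate (R : archiRealFieldType) (u : R^nat) (l c r : R) :
  `|r| < 1 -> (forall k, `|l - u k| <= c * r ^+ k) -> u @ \oo --> l.
Proof.
move=> r_lt1 u_le; apply/cvgrPdist_le => e e_gt0.
move/cvgrPdist_le: (cvg_geometric c r_lt1) => /(_ e e_gt0).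
apply: filterS => k; rewrite sub0r normrN => geo_k.
exact: le_trans (u_le k) (le_trans (ler_norm _) geo_k).
Qed.

Section Convergence.
Variables (R : realType) (n : nat) (E : rel 'I_n) (m : R) (xs : 'I_n -> R).
Variables (d : measure_display) (T : measurableType d) (P : probability T R).
Variables (theta : nat -> T -> 'I_n) (d0 : 'I_n).
Hypothesis noloop : forall i, ~~ E i i.
Hypothesis outdeg_gt0 : forall j, (0 < outdeg E j)%N.
Hypotheses (m_gt0 : 0 < m) (m_lt1 : m < 1).
Hypothesis xs_fix : forall i,
  xs i = (1 - m) * \sum_j hyperlink R E i j * xs j + m / n%:R.
Hypothesis theta_iid : iid_uniform_seq P theta.

Local Notation path t := (fun j => theta j t).
Local Notation rate := ((n%:R - m) / n%:R).
Local Notation mean k i := (fine (\int[P]_(t in setT) (pr_x E m (path t) k i)%:E)).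

Lemma rate_gt0_lt1 : 0 < rate < 1.
Proof.
have n_ge1 : 1 <= n%:R :> R by rewrite ler1n (leq_ltn_trans _ (ltn_ord d0)).
have n_gt0 : 0 < n%:R :> R := lt_le_trans ltr01 n_ge1.
by rewrite divr_gt0 ?subr_gt0 ?(lt_le_trans m_lt1 n_ge1) //= ltr_pdivrMr // mul1r gtrBl.
Qed.

Lemma norm_rate_lt1 : `|rate| < 1.
Proof. by case/andP: rate_gt0_lt1 => rate_gt0 rate_lt1; rewrite gtr0_norm. Qed.

Lemma pr_state_prefix k t :
  pr_state E m (path t) k = pr_state E m (nth d0 (prefix theta k t)) k.
Proof. by apply: pr_state_ext => j lt_jk; rewrite nth_mkseq. Qed.

Lemma mean_pr_x k i :
  mean k i = \sum_(s <- words 'I_n k) pr_x E m (nth d0 s) k i * n%:R^-1 ^+ k.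
Proof.
under eq_integral do rewrite /pr_x pr_state_prefix.
rewrite (integral_prefix d0 theta_iid k (g := fun s => pr_x E m (nth d0 s) k i)) //.
by move=> s; exact: pr_x_ge0.
Qed.

Lemma mean_gap k : \sum_i `|mean k i - xs i| = (1 - m) * rate ^+ k.
Proof.
pose q := n%:R^-1 ^+ k : R.
have q_sum : \sum_(s <- words 'I_n k) q = 1.
  rewrite big_const_seq count_predT iter_addr_0 size_words card_ord.
  by rewrite -mulr_natr natrX -exprMn mulVf ?(natr_neq0_of_ord _ d0) ?expr1n.
have gap_mean i :
    xs i - mean k i = \sum_(s <- words 'I_n k) (xs i - pr_x E m (nth d0 s) k i) * q.
  rewrite mean_pr_x -[X in X - _]mulr1 -[in X in X - _]q_sum mulr_sumr -sumrB.
  by apply: eq_bigr => s _; rewrite mulrBl.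
transitivity (\sum_i (xs i - mean k i)).
  apply: eq_bigr => i _; rewrite distrC ger0_norm // gap_mean.
  apply: sumr_ge0 => s _; rewrite mulr_ge0 ?exprn_ge0 ?invr_ge0 ?ler0n //.
  by rewrite subr_ge0 (pr_x_le noloop outdeg_gt0 m_gt0 m_lt1 xs_fix).
under eq_bigr do rewrite gap_mean.
rewrite exchange_big /=.
under eq_bigr do rewrite -mulr_suml (sum_pr_gap noloop outdeg_gt0 m_gt0 xs_fix).
rewrite -mulr_suml -mulr_sumr (sum_words_zmass m noloop outdeg_gt0) /q exprMn.
by field; rewrite gt_eqF.
Qed.

Lemma zmass_ge_prefix_set k e :
  [set t | e <= zmass (pr_state E m (path t) k)]
  = [set t | (fun s => e <= zmass (pr_state E m (nth d0 s) k)) (prefix theta k t)].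
Proof. by apply/seteqP; split => t /=; rewrite pr_state_prefix. Qed.

Lemma probability_zmass_ge k e : 0 < e ->
  (P [set t | e <= zmass (pr_state E m (path t) k)]%R <= (m / e * rate ^+ k)%R%:E)%E.
Proof.
move=> e_gt0; rewrite zmass_ge_prefix_set.
rewrite (probability_prefix_set d0 theta_iid k (fun s => e <= zmass (pr_state E m (nth d0 s) k))).
rewrite lee_fin.
pose q := n%:R^-1 ^+ k : R.
apply: (@le_trans _ _ (\sum_(s <- words 'I_n k) zmass (pr_state E m (nth d0 s) k) / e * q)).
  apply: ler_sum => s _; apply: ler_wpM2r; first by rewrite exprn_ge0 ?invr_ge0 ?ler0n.
  have := zmass_pr_state_ge0 E m_gt0 m_lt1 (nth d0 s) k.
  set z := zmass _ => z_ge0.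
  case: (boolP (e <= z)) => [le_ez|_]; last exact: divr_ge0 z_ge0 (ltW e_gt0).
  by rewrite ler_pdivlMr // mul1r.
rewrite -!mulr_suml (sum_words_zmass m noloop outdeg_gt0) [leLHS](_ : _ = m / e * rate ^+ k) //.
by rewrite /q exprMn; field; rewrite gt_eqF.
Qed.

Lemma ae_zmass_vanishes : {ae P, forall t, forall e, 0 < e ->
  exists k, zmass (pr_state E m (path t) k) < e}.
Proof.
pose A (j k : nat) := [set t | j.+1%:R^-1 <= zmass (pr_state E m (path t) k)].
have A_meas j k : measurable (A j k).
  rewrite /A zmass_ge_prefix_set.
  exact: (measurable_prefix_set d0 theta_iid k (fun s => _ <= zmass (pr_state E m (nth d0 s) k))).
have A_null j : P (\bigcap_k A j k) = 0%E.
  have cap_meas : measurable (\bigcap_k A j k) := bigcapT_measurable (A_meas j).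
  have cap_fin : P (\bigcap_k A j k) \is a fin_num.
    by rewrite ge0_fin_numE ?measure_ge0 // (le_lt_trans (probability_le1 P cap_meas)) ?ltry.
  suff cap_le0 : (P (\bigcap_k A j k) <= 0)%E by apply/eqP; rewrite -measure_le0.
  rewrite -(fineK cap_fin) lee_fin.
  apply: (geometric_bound_le0 (c := m / j.+1%:R^-1) norm_rate_lt1) => k.
  rewrite -lee_fin fineK //; apply: le_trans (probability_zmass_ge _ _); last first.
    by rewrite invr_gt0 ltr0Sn.
  by apply: le_measure; [exact: mem_set cap_meas | exact: mem_set (A_meas j k) | exact: bigcap_inf].
apply: (@negligibleS _ _ _ P (\bigcup_j \bigcap_k A j k)).
  move=> t /= t_bad; apply: contrapT => t_out; apply: t_bad => e e_gt0.
  have [j] := ltr_add_invr e_gt0; rewrite add0r => lt_je.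
  apply: contrapT => zmass_ge; apply: t_out; exists j => // k _ /=.
  rewrite /A /= leNgt; apply/negP => lt_zk; apply: zmass_ge.
  by exists k; exact: lt_trans lt_zk lt_je.
apply: negligible_bigcup => j; exists (\bigcap_k A j k).
by split; [exact: bigcapT_measurable | exact: A_null |].
Qed.

End Convergence.

Theorem theorem1 (R : realType) (n : nat) (E : rel 'I_n) (m : R)
  (xstar : 'cV[R]_n)
  (d : measure_display) (T : measurableType d) (P : probability T R)
  (theta : nat -> T -> 'I_n) :
  (2 <= n)%N ->
  (forall i : 'I_n, ~~ E i i) ->
  (forall j : 'I_n, (1 <= outdeg E j)%N) ->
  0 < m < 1 ->
  xstar = (1 - m) *: (hyperlink R E *m xstar) + (m / n%:R) *: const_mx 1 ->
  \sum_(i < n) xstar i ord0 = 1 ->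
  iid_uniform_seq P theta ->
  let x := fun (k : nat) (t : T) => pr_x E m (fun j => theta j t) k in
  let Ex := fun (k : nat) (i : 'I_n) => fine (\int[P]_(t in setT) (x k t i)%:E) in
  {ae P, forall t, forall i : 'I_n, (fun k => x k t i) @ \oo --> xstar i ord0}
  /\ (forall t k (i : 'I_n), x k t i <= x k.+1 t i <= xstar i ord0)
  /\ (forall i : 'I_n, (fun k => Ex k i) @ \oo --> xstar i ord0)
  /\ (exists (C rho : R), 0 < C /\ 0 < rho < 1 /\
        forall k, \sum_(i < n) `|Ex k i - xstar i ord0| <= C * rho ^+ k).
Proof.
move=> n_ge2 noloop outdeg_gt0 /andP[m_gt0 m_lt1] xstar_fix _ theta_iid; cbv zeta.
pose xs i := xstar i ord0.
have xs_fix i : xs i = (1 - m) * \sum_j hyperlink R E i j * xs j + m / n%:R.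
  by rewrite /xs {1}xstar_fix !mxE mulr1.
have d0 : 'I_n := Ordinal (leq_trans (isT : (0 < 2)%N) n_ge2).
have gap := mean_gap d0 noloop outdeg_gt0 m_gt0 m_lt1 xs_fix theta_iid.
split; [|split; [|split]].
- apply: filterS (ae_zmass_vanishes d0 noloop outdeg_gt0 m_gt0 m_lt1 theta_iid).
  by move=> t zmass_small i; exact: (pr_x_cvg noloop outdeg_gt0 m_gt0 m_lt1 xs_fix zmass_small).
- move=> t k i; rewrite (pr_x_nondecreasing E m_gt0 m_lt1) /=.
  exact: (pr_x_le noloop outdeg_gt0 m_gt0 m_lt1 xs_fix).
- move=> i; apply: (cvg_geometric_rate (c := 1 - m) (norm_rate_lt1 d0 m_gt0 m_lt1)) => k.
  by rewrite distrC -gap (bigD1 i) //= lerDl sumr_ge0.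
- exists (1 - m), ((n%:R - m) / n%:R); split; first by rewrite subr_gt0.
  split; first exact: rate_gt0_lt1 d0 m_gt0 m_lt1.
  by move=> k; rewrite gap.
Qed.
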